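(* Assume the setup described in the context, and assume moreover that $\sup_d|\lambda_d|\ll(\log X)^{k/2}$. Then for every $\epsilon>0$, \[\sum_{\substack{X<n\le 2X\\ n\equiv v_0\pmod W}}w_n=\frac{X}{W}\sum_{d,e}\lambda_d\lambda_e\prod_{p\mid de}\frac{\nu(p)}{p}+O\bigl(X^{1/5+\epsilon}\bigr).\]
   Context: Let $X$ be sufficiently large. Let $p_0\in[(\log\log X)/2,X]$ be a prime such that for every $\epsilon>0$, $\sum_{q<X^{1/2-\epsilon},(q,p_0)=1}\sup_{(a,q)=1,\,x'\le X}|\pi(x';q,a)-\pi(x')/\phi(q)|\ll_\epsilon X\exp(-c_0\sqrt{\log X})$ for an absolute $c_0>0$. Let $k\le(\log X)^{1/5}$ and let $\mathcal{L}=\{L_1,\dots,L_k\}$ be distinct linear functions $L_i(n)=a_in+b_i$ with integer coefficients $0<a_i\le(\log X)^{1/3}$, $\gcd(2p_0,a_i)=1$, $0<b_i<X$, which are $\langle P_3\rangle$-admissible: for every prime $p\equiv3\pmod4$ there is $n_p$ with $p\nmid\prod_iL_i(n_p)$. Let $\langle P_3\rangle$ (resp. $\langle P_1\rangle$) be the set of positive integers all of whose prime factors are $\equiv3\pmod4$ (resp. $\equiv1\pmod4$). Let $W=\prod_{p\le2(\log X)^{1/3},\,p\equiv3\ (4),\,p\ne p_0}p$, and let $v_0$ be an integer with $\gcd(L_j(v_0),W)=1$ for all $j$. For primes $p$ let $\nu(p)=\#\{1\le n<p:\prod_{i=1}^kL_i(n)\equiv0\pmod p\}$. Let $\lambda_d$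 be real numbers with $\lambda_d=0$ whenever $d>X^{1/10}$, or $d$ is not squarefree, or $d\notin\langle P_3\rangle$, or $\gcd(d,p_0W)\neq1$. Define $w_n=\bigl(\sum_{d\mid\prod_{i=1}^kL_i(n)}\lambda_d\bigr)^2$ if $n\equiv v_0\pmod W$, and $w_n=0$ otherwise. *)

From mathcomp Require Import all_boot all_order all_algebra.
From mathcomp Require Import all_classical all_reals all_analysis.
Set Implicit Arguments. Unset Strict Implicit. Unset Printing Implicit Defensive.
Import Order.TTheory GRing.Theory Num.Theory.
Definition squarefree (d : nat) : bool :=
  (0 < d)%N && all (fun p => ~~ (p * p %| d)) (primes d).

Definition inP3 (d : nat) : bool :=
  (0 < d)%N && all (fun p => p %% 4 == 3)%N (primes d).

(* A linear form a n + b is represented by the pair (a, b). *)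
Definition Ln (ab : nat * nat) (n : nat) : nat := (ab.1 * n + ab.2)%N.
Definition Lz (ab : nat * nat) (n : int) : int := (ab.1%:Z * n + ab.2%:Z)%R.
Definition prodLn (Ls : seq (nat * nat)) (n : nat) : nat := (\prod_(ab <- Ls) Ln ab n)%N.
Definition prodLz (Ls : seq (nat * nat)) (n : int) : int := (\prod_(ab <- Ls) Lz ab n)%R.

Definition P3_admissible (Ls : seq (nat * nat)) : Prop :=
  forall p : nat, prime p -> (p %% 4 = 3)%N ->
    exists n : int, ~~ (p%:Z %| prodLz Ls n)%Z.

Definition nu (Ls : seq (nat * nat)) (p : nat) : nat :=
  count (fun n => p %| prodLn Ls n)%N (iota 0 p).

Local Open Scope ring_scope.

Definition Wof {R : realType} (B : R) (p0 : nat) : nat :=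
  (\prod_(p < (Num.truncn B).+1 | prime p && (p %% 4 == 3)%N && (nat_of_ord p != p0)
                                   && (p%:R <= B)%R) p)%N.

Definition primepi (x : nat) : nat := count prime (iota 0 x.+1).
Definition primepi_ap (x q a : nat) : nat :=
  count (fun p => prime p && (p %% q == a %% q)%N) (iota 0 x.+1).

(* sup over (a,q)=1 and real x' <= X of |pi(x';q,a) - pi(x')/phi(q)|;
   pi(x') = pi(floor x') and is 0 for x' < 2, so it suffices to take
   integer x' in [0, floor X]. *)
Definition BVerr {R : realType} (X : R) (q : nat) : R :=
  \big[Num.max/0]_(a < q | coprime a q)
    \big[Num.max/0]_(x < (Num.truncn X).+1)
      `| (primepi_ap x q a)%:R - (primepi x)%:R / (totient q)%:R |.

Definition wn {R : realType} (Ls : seq (nat * nat)) (W : nat) (v0 : int)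
    (lam : nat -> R) (n : nat) : R :=
  if (n%:Z == v0 %[mod W%:Z])%Z
  then (\sum_(d <- divisors (prodLn Ls n)) lam d) ^+ 2
  else 0.

From mathcomp Require Import all_boot all_order all_algebra.
From mathcomp Require Import all_classical all_reals all_analysis.
From mathcomp Require Import ring lra.
Set Implicit Arguments. Unset Strict Implicit. Unset Printing Implicit Defensive.
Import Order.TTheory GRing.Theory Num.Theory.

(* Expanding the square, the sum of the w_n is the sum over d, e of
   lam_d lam_e times the number of n in (X, 2X] with n = v0 (mod W) and
   d, e | prod_i L_i(n).  For squarefree d, e coprime to W this condition is
   periodic modulo W * prod_(p | de) p, and by the Chinese remainder theorem
   one period contains exactly prod_(p | de) nu(p) solutions; so the count is
   X/W prod_(p | de) nu(p)/p up to an error of at most 3 prod_(p | de) nu(p)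
   <= 3 k^(omega(d) + omega(e)), since nu(p) <= k for p = 3 (mod 4) by
   admissibility.  The total error is then at most
   3 sup|lam|^2 (sum_(d <= X^(1/10)) k^omega(d))^2, and Rankin's bound
   sum_(d <= N) k^omega(d) <= N^(1+eps) exp(k/eps), together with
   sup|lam|^2 << (log X)^k and k <= (log X)^(1/5), makes it O(X^(1/5+eps)).
   This trivial error bound does not need the Bombieri-Vinogradov hypothesis
   nor most of the size conditions on p0, the L_i and v0. *)

(** * Counting in periodic sets *)

Definition periodic (A : pred nat) (P : nat) := forall n, A n = A (n %% P).

Lemma count_iota_le (A : pred nat) m n : m <= n -> count A (iota 0 m) <= count A (iota 0 n).
Proof. by move=> /subnKC <-; rewrite iotaD count_cat leq_addr. Qed.

Lemma count_iota_sum (A : pred nat) T : count A (iota 0 T) = \sum_(n < T) A n.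
Proof.
rewrite -(big_mkord xpredT (fun n => nat_of_bool (A n))) /index_iota subn0.
by rewrite -sum1_count big_mkcond; apply: eq_bigr => n _; case: (A n).
Qed.

Lemma count_iota_mul_coprime (A B : pred nat) a b :
    0 < a -> 0 < b -> coprime a b -> periodic A a -> periodic B b ->
  count (fun n => A n && B n) (iota 0 (a * b))
    = count A (iota 0 a) * count B (iota 0 b).
Proof.
move=> a_gt0 b_gt0 coab A_per B_per.
pose g (n : 'I_(a * b)) := (Ordinal (ltn_pmod n a_gt0), Ordinal (ltn_pmod n b_gt0)).
have g_inj : injective g.
  move=> m n [mn_mod_a mn_mod_b]; apply: val_inj => /=.
  have : m == n %[mod a * b] by rewrite chinese_remainder // mn_mod_a mn_mod_b !eqxx.
  by rewrite !modn_small // => /eqP.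
have g_bij : bijective g.
  by apply: inj_card_bij => //; rewrite card_prod !card_ord.
rewrite !count_iota_sum big_distrlr pair_big (reindex g) /=; last exact: onW_bij.
by apply: eq_bigr => n _; rewrite A_per B_per; case: (A _); case: (B _).
Qed.

Section PeriodicCount.
Variables (A : pred nat) (P : nat).
Hypothesis A_periodic : periodic A P.

Lemma count_iota_period_shift m n : count A (iota (P + m) n) = count A (iota m n).
Proof.
by rewrite iotaDl count_map; apply: eq_count => i /=; rewrite A_periodic modnDl -A_periodic.
Qed.

Lemma count_iota_periodic T :
  count A (iota 0 T) = T %/ P * count A (iota 0 P) + count A (iota 0 (T %% P)).
Proof.
rewrite {1}(divn_eq T P); elim: (T %/ P) => [|q IH] //.
by rewrite mulSn -addnA iotaD count_cat -[0 + P]addn0 add0n count_iota_period_shift IH addnA.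
Qed.

Local Open Scope ring_scope.

Lemma count_iota_periodic_approx (R : realFieldType) T : (0 < P)%N ->
  `| (count A (iota 0 T))%:R - T%:R * (count A (iota 0 P))%:R / P%:R |
    <= (count A (iota 0 P))%:R :> R.
Proof.
move=> P_gt0; set c := count A (iota 0 P).
have r_le_c : (count A (iota 0 (T %% P)) <= c)%N by apply/count_iota_le/ltnW/ltn_pmod.
have fracT : (T %% P)%:R * c%:R / P%:R <= c%:R :> R.
  by rewrite ler_pdivrMr ?ltr0n // mulrC ler_wpM2l // ler_nat ltnW // ltn_pmod.
have P_neq0 : P%:R != 0 :> R by rewrite pnatr_eq0 -lt0n.
have -> : T%:R * c%:R / P%:R = (T %/ P * c)%:R + (T %% P)%:R * c%:R / P%:R :> R.
  by rewrite {1}(divn_eq T P) natrD !natrM; field.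
rewrite count_iota_periodic natrD -/c opprD addrACA subrr add0r.
have u_ge0 : 0 <= (T %% P)%:R * c%:R / P%:R :> R by rewrite mulr_ge0 ?divr_ge0.
have r_ge0 : 0 <= (count A (iota 0 (T %% P)))%:R :> R := ler0n _ _.
move: r_le_c; rewrite -(ler_nat R) => r_le_c.
rewrite ler_norml; apply/andP; split; lra.
Qed.

Lemma sum_window_periodic (R : archiRealFieldType) (X : R) : (0 < P)%N -> 0 <= X ->
  `| \sum_(n < (Num.truncn (2 * X)).+1 | (X < n%:R) && (n%:R <= 2 * X)) (A n)%:R
     - X * (count A (iota 0 P))%:R / P%:R | <= 3 * (count A (iota 0 P))%:R.
Proof.
move=> P_gt0 X_ge0; set c := count A (iota 0 P).
set a := Num.truncn X; set M := Num.truncn (2 * X).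
have [a_le_X X_lt_a1] := andP (truncn_itv X_ge0).
have twoX_ge0 : 0 <= 2 * X by lra.
have [M_le_2X twoX_lt_M1] := andP (truncn_itv twoX_ge0).
have a_le_M : (a <= M)%N by apply: le_truncn; lra.
have window_count : (\sum_(n < M.+1 | (X < n%:R)%R && (n%:R <= 2 * X)%R) A n)%N
    = (count A (iota 0 M.+1) - count A (iota 0 a.+1))%N.
  rewrite (eq_bigl (fun n : 'I_M.+1 => a < n)%N); last first.
    move=> n; rewrite -truncn_lt_nat // -truncn_ge_nat // -/a -/M.
    by rewrite (ltn_ord n : (n <= M)%N) andbT.
  rewrite -(@big_geq_mkord _ 0%N addn a.+1 M.+1 xpredT (fun n => nat_of_bool (A n))).
  rewrite -{2}(subnKC (a_le_M : a.+1 <= M.+1)%N).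
  rewrite iotaD count_cat addKn /index_iota add0n -sum1_count [RHS]big_mkcond.
  by apply: eq_bigr => n _; case: (A n).
rewrite -natr_sum window_count natrB ?count_iota_le //.
have approxM := count_iota_periodic_approx R M.+1 P_gt0.
have approxa := count_iota_periodic_approx R a.+1 P_gt0.
rewrite -/c -!mulrA in approxM approxa *; set u := c%:R / P%:R in approxM approxa *.
have u_ge0 : 0 <= u by rewrite divr_ge0.
have u_le_c : u <= c%:R by rewrite ler_pdivrMr ?ltr0n // ler_peMr // ler1n.
have rounding : `|(M.+1%:R - a.+1%:R - X) * u| <= c%:R.
  rewrite normrM (ger0_norm u_ge0) -[leRHS]mul1r; apply: ler_pM => //.
  rewrite -!natr1 ler_norml; apply/andP; split; lra.
move: approxM approxa rounding; rewrite !ler_norml => /andP[? ?] /andP[? ?] /andP[? ?].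
apply/andP; split; lra.
Qed.
End PeriodicCount.

(** * Linear forms and their local densities *)

Lemma coprime_prod_primes (ps : seq nat) p :
  prime p -> p \notin ps -> all prime ps -> coprime p (\prod_(q <- ps) q).
Proof.
move=> p_pr p_ps /allP ps_pr; rewrite prime_coprime // Euclid_dvd_prod // big_has.
apply/hasP => -[q q_ps]; rewrite dvdn_prime2 ?(ps_pr q q_ps) // => /eqP p_eq_q.
by rewrite p_eq_q q_ps in p_ps.
Qed.

Lemma dvdn_prod_primes (ps : seq nat) x : uniq ps -> all prime ps ->
  (\prod_(p <- ps) p %| x) = all (dvdn^~ x) ps.
Proof.
elim: ps => [|p ps IH] /=; first by rewrite big_nil dvd1n.
move=> /andP[p_ps ps_uniq] /andP[p_pr ps_pr].
by rewrite big_cons Gauss_dvd ?IH // coprime_prod_primes.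
Qed.

Lemma squarefree_prod_primes d : squarefree d -> \prod_(p <- primes d) p = d.
Proof.
move=> /andP[d_gt0 /allP sq_free].
rewrite [RHS]prod_prime_decomp // prime_decompE big_map.
apply: eq_big_seq => p p_d /=.
have p_pr : prime p by move: p_d; rewrite mem_primes => /andP[].
suff -> : logn p d = 1 by rewrite expn1.
apply/eqP; rewrite eqn_leq logn_gt0 p_d andbT leqNgt.
by apply: contra (sq_free p p_d) => ?; rewrite mulnn pfactor_dvdn.
Qed.

Lemma squarefree_dvdn d x : squarefree d -> (d %| x) = all (dvdn^~ x) (primes d).
Proof.
move=> d_sqf; rewrite -{1}(squarefree_prod_primes d_sqf) dvdn_prod_primes ?primes_uniq //.
by apply/allP => p; rewrite mem_primes => /andP[].
Qed.

Lemma Ln_congr ab m n p : m = n %[mod p] -> Ln ab m = Ln ab n %[mod p].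
Proof. by move=> e; rewrite /Ln -modnDml -modnMmr e modnMmr modnDml. Qed.

Lemma prodLn_congr Ls m n p : m = n %[mod p] -> prodLn Ls m = prodLn Ls n %[mod p].
Proof.
move=> e; apply: (big_ind2 (fun x y => x = y %[mod p])) => // [x1 x2 y1 y2 e1 e2|ab _].
  by rewrite -modnMm e1 e2 modnMm.
exact: Ln_congr.
Qed.

Lemma periodic_dvdn_prodLn Ls d M : d %| M -> periodic (fun n => d %| prodLn Ls n) M.
Proof. by move=> dM n; rewrite /dvdn (@prodLn_congr Ls n (n %% M)) // modn_dvdm. Qed.

Lemma uniq_size_le1 (T : eqType) (s : seq T) :
  uniq s -> {in s &, forall x y, x = y} -> size s <= 1.
Proof.
case: s => [|x [|y s]] //= /andP[x_notin _] all_eq.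
by move: x_notin; rewrite (all_eq x y) ?inE ?eqxx ?orbT.
Qed.

Lemma count_roots_Ln_le1 ab p : prime p -> ~~ ((p %| ab.1) && (p %| ab.2)) ->
  count (fun n => p %| Ln ab n) (iota 0 p) <= 1.
Proof.
move=> p_pr ab_p; rewrite -size_filter; apply: uniq_size_le1.
  by rewrite filter_uniq ?iota_uniq.
suff root_unique x y : x <= y < p -> p %| Ln ab x -> p %| Ln ab y -> x = y.
  move=> x y; rewrite !mem_filter !mem_iota /= => /andP[px x_lt] /andP[py y_lt].
  by case: (leqP x y) => [xy|/ltnW yx]; [|apply/esym]; apply: root_unique; rewrite ?xy ?yx.
move=> /andP[x_le_y y_lt] px py.
have : p %| ab.1 * (y - x) by rewrite mulnBr -(subnDr ab.2) dvdn_sub.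
rewrite Euclid_dvdM // => /orP[p_a|p_yx].
  by move: ab_p; rewrite p_a /= -(dvdn_addr _ (dvdn_mulr x p_a)) px.
apply/eqP; rewrite eqn_leq x_le_y leqNgt -subn_gt0; apply/negP => yx_gt0.
by move: (dvdn_leq yx_gt0 p_yx); rewrite leqNgt (leq_ltn_trans (leq_subr x y) y_lt).
Qed.

Lemma nu_le_size Ls p : prime p ->
  (forall ab, ab \in Ls -> ~~ ((p %| ab.1) && (p %| ab.2))) -> nu Ls p <= size Ls.
Proof.
move=> p_pr; elim: Ls => [|ab Ls IH] no_common.
  rewrite /nu (@eq_count _ _ pred0) ?count_pred0 // => n.
  by rewrite /prodLn big_nil dvdn1 gtn_eqF ?prime_gt1.
have ab_ok := no_common ab (mem_head ab Ls).
have Ls_ok : nu Ls p <= size Ls.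
  by apply: IH => ab' ab'_Ls; apply: no_common; rewrite in_cons ab'_Ls orbT.
pose A n := p %| Ln ab n; pose B n := p %| prodLn Ls n.
rewrite /nu (eq_count (a2 := predU A B)).
  apply: leq_trans (leq_addr (count (predI A B) (iota 0 p)) _) _.
  by rewrite count_predUI; apply: leq_add (count_roots_Ln_le1 p_pr ab_ok) Ls_ok.
by move=> n; rewrite /= /prodLn big_cons Euclid_dvdM.
Qed.

Lemma P3_admissible_coprime_coeffs Ls p ab :
  P3_admissible Ls -> prime p -> p %% 4 = 3 -> ab \in Ls -> ~~ ((p %| ab.1) && (p %| ab.2)).
Proof.
move=> Ls_adm p_pr p_mod4 ab_Ls; have [n0 not_dvd] := Ls_adm p p_pr p_mod4.
apply: contra not_dvd => /andP[p_a p_b].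
by rewrite /prodLz (big_rem ab ab_Ls) dvdz_mulr // /Lz rpredD ?dvdz_mulr.
Qed.

Lemma nu_le_size_P3 Ls d p : P3_admissible Ls -> inP3 d -> p \in primes d ->
  nu Ls p <= size Ls.
Proof.
move=> Ls_adm /andP[_ /allP d_P3] p_d.
have p_pr : prime p by move: p_d; rewrite mem_primes => /andP[].
by apply: nu_le_size => // ab; apply: P3_admissible_coprime_coeffs => //; apply/eqP/d_P3.
Qed.

Definition sieve_cond Ls W v (ps : seq nat) n :=
  (n %% W == v) && all (dvdn^~ (prodLn Ls n)) ps.

Lemma sieve_cond_periodic Ls W v ps :
  periodic (sieve_cond Ls W v ps) (W * \prod_(p <- ps) p).
Proof.
move=> n; rewrite /sieve_cond modn_dvdm ?dvdn_mulr //; congr andb.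
apply: eq_in_all => p p_ps; apply: periodic_dvdn_prodLn.
by rewrite dvdn_mull // (big_rem p p_ps) dvdn_mulr.
Qed.

Lemma count_sieve_cond Ls W v ps : 0 < W -> v < W -> uniq ps -> all prime ps ->
    all (coprime W) ps ->
  count (sieve_cond Ls W v ps) (iota 0 (W * \prod_(p <- ps) p)) = \prod_(p <- ps) nu Ls p.
Proof.
move=> W_gt0 v_lt_W; elim: ps => [|p ps IH] /=.
  move=> _ _ _; rewrite !big_nil muln1 (@eq_in_count _ _ (pred1 v)).
    by rewrite count_uniq_mem ?iota_uniq // mem_iota add0n v_lt_W.
  by move=> n; rewrite mem_iota /sieve_cond andbT => /andP[_ n_lt_W]; rewrite modn_small.
move=> /andP[p_ps ps_uniq] /andP[p_pr ps_pr] /andP[W_p W_ps].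
have ps_gt0 : 0 < \prod_(q <- ps) q.
  by rewrite big_seq prodn_cond_gt0 // => q /(allP ps_pr)/prime_gt0.
rewrite !big_cons mulnCA -(IH ps_uniq ps_pr W_ps) -count_iota_mul_coprime.
- by apply: eq_count => n; rewrite /sieve_cond /= andbCA.
- exact: prime_gt0.
- by rewrite muln_gt0 W_gt0.
- by rewrite coprimeMr coprime_sym W_p coprime_prod_primes.
- exact: periodic_dvdn_prodLn.
- exact: sieve_cond_periodic.
Qed.

Lemma prod_le_exp (ps : seq nat) (f : nat -> nat) k :
  (forall p, p \in ps -> f p <= k) -> \prod_(p <- ps) f p <= k ^ size ps.
Proof.
elim: ps => [|p ps IH] f_le; first by rewrite big_nil.
rewrite big_cons expnS leq_mul ?f_le ?mem_head //.
by apply: IH => q q_ps; apply: f_le; rewrite in_cons q_ps orbT.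
Qed.

Lemma congr_int_nat (n W : nat) (v0 : int) : 0 < W ->
  (n%:Z == v0 %[mod W%:Z])%Z = (n %% W == `|(v0 %% W%:Z)%Z|%N).
Proof.
move=> W_gt0; rewrite modz_nat -eqz_nat gez0_abs // modz_ge0 //.
by rewrite eqz_nat -lt0n.
Qed.

Lemma dvdn2_sieve_cond Ls W (v0 : int) d e n :
    0 < W -> squarefree d -> squarefree e ->
  (n%:Z == v0 %[mod W%:Z])%Z && (d %| prodLn Ls n) && (e %| prodLn Ls n)
    = sieve_cond Ls W `|(v0 %% W%:Z)%Z|%N (primes (d * e)) n.
Proof.
move=> W_gt0 d_sqf e_sqf; have [d_gt0 e_gt0] : 0 < d /\ 0 < e.
  by case/andP: d_sqf; case/andP: e_sqf.
rewrite congr_int_nat // (squarefree_dvdn _ d_sqf) (squarefree_dvdn _ e_sqf) -andbA -all_cat.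
by rewrite /sieve_cond (eq_all_r (_ : _ =i primes (d * e))) // => p; rewrite mem_cat primesM.
Qed.

Local Open Scope ring_scope.

Lemma sum_window_dvdn2 (R : archiRealFieldType) (X : R) Ls W (v0 : int) d e κ :
    0 <= X -> (0 < W)%N -> (0 < κ)%N -> squarefree d -> squarefree e ->
    coprime d W -> coprime e W ->
    (forall p, p \in primes d ++ primes e -> nu Ls p <= κ)%N ->
  `| \sum_(n < (Num.truncn (2 * X)).+1 | (X < n%:R) && (n%:R <= 2 * X)
           && (n%:Z == v0 %[mod W%:Z])%Z)
        ((d %| prodLn Ls n) && (e %| prodLn Ls n))%N%:R
     - X / W%:R * \prod_(p <- primes (d * e)) ((nu Ls p)%:R / p%:R) |
  <= 3 * κ%:R ^+ (size (primes d) + size (primes e)).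
Proof.
move=> X_ge0 W_gt0 κ_gt0 d_sqf e_sqf d_W e_W nu_le_κ.
have [d_gt0 e_gt0] : (0 < d)%N /\ (0 < e)%N by case/andP: d_sqf; case/andP: e_sqf.
set ps := primes (d * e); set v := `|(v0 %% W%:Z)%Z|%N.
have ps_cat : ps =i primes d ++ primes e by move=> p; rewrite mem_cat primesM.
have ps_pr : all prime ps by apply/allP => p; rewrite mem_primes => /andP[].
have W_ps : all (coprime W) ps.
  apply/allP => p; rewrite ps_cat mem_cat !mem_primes coprime_sym.
  by case/orP => /and3P[_ _ p_dvd]; [apply: coprime_dvdl d_W | apply: coprime_dvdl e_W].
have v_lt_W : (v < W)%N.
  by rewrite -ltz_nat gez0_abs ?ltz_pmod ?modz_ge0 // eqz_nat -lt0n.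
have M_gt0 : (0 < W * \prod_(p <- ps) p)%N.
  by rewrite muln_gt0 W_gt0 big_seq prodn_cond_gt0 // => p /(allP ps_pr)/prime_gt0.
have -> : X / W%:R * \prod_(p <- ps) ((nu Ls p)%:R / p%:R)
    = X * (count (sieve_cond Ls W v ps) (iota 0 (W * \prod_(p <- ps) p)))%:R
        / (W * \prod_(p <- ps) p)%:R.
  by rewrite count_sieve_cond ?primes_uniq // prodf_div natrM !natr_prod invfM; ring.
set S := \sum_(n < _ | _) _.
have -> : S = \sum_(n < (Num.truncn (2 * X)).+1 | (X < n%:R) && (n%:R <= 2 * X))
                (sieve_cond Ls W v ps n)%:R.
  rewrite /S big_mkcondr; apply: eq_bigr => n _.
  by rewrite -dvdn2_sieve_cond //; case: (_ == _ %[mod _])%Z.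
apply: le_trans (sum_window_periodic (sieve_cond_periodic Ls W v ps) M_gt0 X_ge0) _.
rewrite count_sieve_cond ?primes_uniq // ler_pM2l // -natrX ler_nat.
apply: leq_trans (prod_le_exp (f := nu Ls) (k := κ) _) _ => [p p_ps|].
  by apply: nu_le_κ; rewrite -ps_cat.
by rewrite leq_pexp2l // -size_cat uniq_leq_size ?primes_uniq // => p; rewrite ps_cat.
Qed.

Lemma big_seq_ord (V : Type) (idx : V) (op : Monoid.com_law idx) (s : seq nat) N F :
  uniq s -> (forall x, x \in s -> (x < N)%N) ->
  \big[op/idx]_(x <- s) F x = \big[op/idx]_(i < N | (i : nat) \in s) F i.
Proof.
move=> s_uniq s_lt; rewrite -(big_mkord (mem s)) -[RHS]big_filter; apply: perm_big.
apply: uniq_perm; rewrite ?filter_uniq ?iota_uniq // => x.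
rewrite mem_filter /index_iota subn0 mem_iota /=.
by case x_s: (x \in s); rewrite //= s_lt.
Qed.

Lemma sum_divisors_bounded (V : nmodType) (F : nat -> V) m N :
  (0 < m)%N -> (forall d, F d != 0 -> (d <= N)%N) ->
  \sum_(d <- divisors m) F d = \sum_(d < N.+1 | (d %| m)%N) F d.
Proof.
move=> m_gt0 F_supp; rewrite (bigID (fun d => d < N.+1)%N) /= [X in _ + X]big1 ?addr0.
  rewrite -big_filter (@big_seq_ord _ _ _ _ N.+1) ?filter_uniq ?divisors_uniq // => [|d].
    by apply: eq_bigl => d; rewrite mem_filter ltn_ord -dvdn_divisors // andbT.
  by rewrite mem_filter => /andP[].
by move=> d; rewrite ltnS; apply: contraNeq; apply: F_supp.
Qed.

Lemma wn_expand (R : realType) Ls W (v0 : int) (lam : nat -> R) N n :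
    (0 < prodLn Ls n)%N -> (n%:Z == v0 %[mod W%:Z])%Z ->
    (forall d, lam d != 0 -> (d <= N)%N) ->
  wn Ls W v0 lam n = \sum_(d < N.+1) \sum_(e < N.+1)
    lam d * lam e * ((d %| prodLn Ls n) && (e %| prodLn Ls n))%N%:R.
Proof.
move=> P_gt0 n_cong lam_supp.
rewrite /wn n_cong (sum_divisors_bounded P_gt0 lam_supp) expr2 !big_mkcond big_distrlr /=.
apply: eq_bigr => d _; apply: eq_bigr => e _.
by case: (d %| _)%N; case: (e %| _)%N; rewrite ?mulr0 ?mul0r ?mulr1.
Qed.

Lemma sum_wn_sub_main (R : realType) (X : R) N W Ls (v0 : int) (lam : nat -> R) :
    (forall ab, ab \in Ls -> 0 < ab.2)%N -> (forall d, lam d != 0 -> (d <= N)%N) ->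
  \sum_(n < (Num.truncn (2 * X)).+1 | (X < n%:R) && (n%:R <= 2 * X)
           && (n%:Z == v0 %[mod W%:Z])%Z) wn Ls W v0 lam n
    - X / W%:R * \sum_(d < N.+1) \sum_(e < N.+1)
        lam d * lam e * \prod_(p <- primes (d * e)) ((nu Ls p)%:R / p%:R)
  = \sum_(d < N.+1) \sum_(e < N.+1) lam d * lam e *
      (\sum_(n < (Num.truncn (2 * X)).+1 | (X < n%:R) && (n%:R <= 2 * X)
                && (n%:Z == v0 %[mod W%:Z])%Z)
         ((d %| prodLn Ls n) && (e %| prodLn Ls n))%N%:R
       - X / W%:R * \prod_(p <- primes (d * e)) ((nu Ls p)%:R / p%:R)).
Proof.
move=> b_gt0 lam_supp.
have P_gt0 n : (0 < prodLn Ls n)%N.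
  by rewrite /prodLn big_seq prodn_cond_gt0 // => ab /b_gt0 ?; rewrite /Ln ltn_addl.
under eq_bigr => n /andP[_ n_cong] do rewrite (wn_expand (P_gt0 n) n_cong lam_supp).
rewrite exchange_big /=; under eq_bigr do rewrite exchange_big /=.
under eq_bigr do under eq_bigr do rewrite -mulr_sumr.
rewrite mulr_sumr; under [X in _ - X]eq_bigr do rewrite mulr_sumr.
rewrite -sumrB; apply: eq_bigr => d _; rewrite -sumrB.
by apply: eq_bigr => e _; rewrite [X / _ * _]mulrCA -mulrBr.
Qed.

Lemma sum_wn_approx (R : realType) (X Λ : R) N W κ Ls (v0 : int) (lam : nat -> R) :
    0 <= X -> (0 < W)%N -> (size Ls <= κ)%N -> (0 < κ)%N -> P3_admissible Ls ->
    (forall ab, ab \in Ls -> 0 < ab.2)%N ->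
    (forall d, lam d != 0 -> [/\ (d <= N)%N, squarefree d, inP3 d & coprime d W]) ->
    (forall d, `|lam d| <= Λ) ->
  `| \sum_(n < (Num.truncn (2 * X)).+1 | (X < n%:R) && (n%:R <= 2 * X)
            && (n%:Z == v0 %[mod W%:Z])%Z) wn Ls W v0 lam n
     - X / W%:R * \sum_(d < N.+1) \sum_(e < N.+1)
          lam d * lam e * \prod_(p <- primes (d * e)) ((nu Ls p)%:R / p%:R) |
  <= 3 * Λ ^+ 2 * (\sum_(d < N.+1 | squarefree d) κ%:R ^+ size (primes d)) ^+ 2.
Proof.
move=> X_ge0 W_gt0 Ls_κ κ_gt0 Ls_adm b_gt0 lam_supp lam_le.
rewrite sum_wn_sub_main // => [|d]; last by case/lam_supp.
pose F d : R := if squarefree d then κ%:R ^+ size (primes d) else 0.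
have -> : (\sum_(d < N.+1 | squarefree d) κ%:R ^+ size (primes d)) ^+ 2
    = \sum_(d < N.+1) \sum_(e < N.+1) F d * F e.
  by rewrite expr2 big_mkcond big_distrlr.
rewrite mulr_sumr; apply: le_trans (ler_norm_sum _ _ _) _; apply: ler_sum => d _.
rewrite mulr_sumr; apply: le_trans (ler_norm_sum _ _ _) _; apply: ler_sum => e _.
rewrite normrM.
have Λ_ge0 : 0 <= Λ by apply: le_trans (lam_le 0%N).
have F_ge0 x : 0 <= F x by rewrite /F; case: ifP.
have [->|lam_d] := eqVneq (lam d) 0.
  by rewrite mul0r normr0 mul0r !mulr_ge0 ?sqr_ge0.
have [->|lam_e] := eqVneq (lam e) 0.
  by rewrite mulr0 normr0 mul0r !mulr_ge0 ?sqr_ge0.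
have [_ d_sqf d_P3 d_W] := lam_supp d lam_d.
have [_ e_sqf e_P3 e_W] := lam_supp e lam_e.
have nu_le_κ p : p \in primes d ++ primes e -> (nu Ls p <= κ)%N.
  rewrite mem_cat => /orP[] p_primes; apply: leq_trans Ls_κ.
    exact: nu_le_size_P3 p_primes.
  exact: nu_le_size_P3 p_primes.
rewrite /F d_sqf e_sqf -exprD [3 * _ * _]mulrAC [_ * Λ ^+ 2]mulrC.
apply: ler_pM => //; first by rewrite normrM expr2 ler_pM.
exact: sum_window_dvdn2.
Qed.

(** * Rankin's bound *)

Lemma sum_squarefree_prod_le (R : realDomainType) (g : nat -> R) N :
  (forall p, 0 <= g p) ->
  \sum_(d < N.+1 | squarefree d) \prod_(p <- primes d) g p
    <= \prod_(p < N.+1 | prime p) (1 + g p).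
Proof.
move=> g_ge0; pose H (i : 'I_N.+1) := if prime i then g i else 0.
pose Phi (J : {set 'I_N.+1}) := \prod_i (if i \in J then H i else 1).
pose J_of (d : 'I_N.+1) := [set i : 'I_N.+1 | (i : nat) \in primes d].
have primes_lt (d : 'I_N.+1) p : p \in primes d -> (p < N.+1)%N.
  by rewrite mem_primes => /and3P[_ d_gt0 p_d]; apply: leq_ltn_trans (dvdn_leq d_gt0 p_d) _.
have prod_Phi (d : 'I_N.+1) : \prod_(p <- primes d) g p = Phi (J_of d).
  rewrite (big_seq_ord _ _ (primes_uniq d) (primes_lt d)) big_mkcond.
  apply: eq_bigr => i _; rewrite inE; case: ifP => // i_d.
  by move: i_d; rewrite /H mem_primes => /andP[->].
have J_inj : {in [pred d : 'I_N.+1 | squarefree d] &, injective J_of}.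
  move=> d1 d2 d1_sqf d2_sqf J_eq; apply: val_inj.
  rewrite /= -(squarefree_prod_primes d1_sqf) -(squarefree_prod_primes d2_sqf).
  congr (\prod_(p <- _) p); apply/eq_primes => p; case: (ltnP p N.+1) => [p_lt | p_ge].
    by have := congr1 (fun J : {set 'I_N.+1} => Ordinal p_lt \in J) J_eq; rewrite !inE.
  by apply/idP/idP => /primes_lt; rewrite ltnNge p_ge.
have -> : \prod_(p < N.+1 | prime p) (1 + g p) = \sum_J Phi J.
  rewrite big_mkcond -bigA_distr; apply: eq_bigr => i _.
  by rewrite /H; case: (prime i) => /=; rewrite ?add0r // addrC.
under eq_bigr => d _ do rewrite prod_Phi.
rewrite -[X in X <= _](big_imset _ J_inj) /=; set A := J_of @: _.
rewrite [leRHS](bigID (mem A)) /= lerDl.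
by apply: sumr_ge0 => J _; apply: prodr_ge0 => i _; rewrite /H; case: ifP => //; case: ifP.
Qed.

Section Rankin.
Variable R : realType.

Lemma ln_subr1_le (t : R) : 1 < t -> ln (t - 1) <= ln t - t^-1.
Proof.
move=> t_gt1; have t_gt0 : 0 < t by lra.
have t_inv_lt1 : t^-1 < 1 by rewrite invf_lt1.
have -> : t - 1 = t * (1 - t^-1) by rewrite mulrBr mulr1 divff ?gt_eqF.
rewrite lnM ?posrE ?subr_gt0 // lerD2l le_ln1Dx // ltrN2.
by rewrite invf_lt1.
Qed.

Lemma inv_powR_le_telescope (t δ : R) : 2 <= t -> 0 < δ ->
  (t `^ (1 + δ))^-1 <= δ^-1 * (((t - 1) `^ δ)^-1 - (t `^ δ)^-1).
Proof.
move=> t_ge2 δ_gt0; have t_gt1 : 1 < t by lra.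
have t_gt0 : 0 < t by lra.
have t1_gt0 : 0 < t - 1 by lra.
set u := t `^ δ; set w := (t - 1) `^ δ.
have u_gt0 : 0 < u by apply: powR_gt0.
have w_gt0 : 0 < w by apply: powR_gt0.
have -> : t `^ (1 + δ) = t * u.
  by rewrite powRD ?powRr1 ?(ltW t_gt0) // (gt_eqF t_gt0) implybT.
have w_le : w * (1 + δ / t) <= u.
  rewrite /w /u /powR (gt_eqF t_gt0) (gt_eqF t1_gt0).
  apply: le_trans (ler_wpM2l (expR_ge0 _) (expR_ge1Dx (δ / t))) _.
  rewrite -expRD ler_expR.
  have := ln_subr1_le t_gt1; rewrite -(ler_pM2l δ_gt0) mulrBr; lra.
have key : δ * w <= t * (u - w).
  have := w_le; rewrite -(ler_pM2r t_gt0).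
  have -> : w * (1 + δ / t) * t = t * w + δ * w by field; rewrite gt_eqF.
  rewrite mulrBr [u * t]mulrC; lra.
rewrite -subr_ge0.
have -> : δ^-1 * (w^-1 - u^-1) - (t * u)^-1 = (t * (u - w) - δ * w) / (δ * t * u * w).
  by field; rewrite !gt_eqF.
by rewrite divr_ge0 ?subr_ge0 // ltW // !mulr_gt0.
Qed.

Lemma sum_inv_powR_le (δ : R) n : 0 < δ ->
  \sum_(2 <= i < n) (i%:R `^ (1 + δ))^-1 <= δ^-1.
Proof.
move=> δ_gt0; case: n => [|[|m]]; try by rewrite big_geq ?invr_ge0 ?ltW.
suff partial_sum : \sum_(2 <= i < m.+2) (i%:R `^ (1 + δ))^-1
                   <= δ^-1 * (1 - (m.+1%:R `^ δ)^-1).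
  apply: le_trans partial_sum _; rewrite -[leRHS]mulr1 ler_wpM2l ?invr_ge0 ?ltW //.
elim: m => [|m IH]; first by rewrite big_geq // powR1 invr1 subrr mulr0.
rewrite big_nat_recr //=; apply: le_trans (lerD IH (inv_powR_le_telescope _ δ_gt0)) _.
  by rewrite ler_nat.
by rewrite -[m.+2%:R]natr1 addrK -mulrDr addrA subrK.
Qed.

Lemma powR_prod (I : Type) (r : seq I) (x : I -> R) s : (forall i, 0 <= x i) ->
  (\prod_(i <- r) x i) `^ s = \prod_(i <- r) x i `^ s.
Proof.
move=> x_ge0; elim: r => [|i r IH]; first by rewrite !big_nil powR1.
by rewrite !big_cons powRM ?IH ?prodr_ge0.
Qed.

Lemma sum_squarefree_exp_omega_le (N κ : nat) (δ : R) : 0 < δ ->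
  \sum_(d < N.+1 | squarefree d) κ%:R ^+ size (primes d)
    <= N%:R `^ (1 + δ) * expR (κ%:R / δ).
Proof.
move=> δ_gt0; set s := 1 + δ; have s_ge0 : 0 <= s by rewrite /s; lra.
pose g (p : nat) : R := κ%:R / p%:R `^ s.
have g_ge0 p : 0 <= g p by rewrite divr_ge0 ?powR_ge0.
have term_le (d : 'I_N.+1) : squarefree d ->
    κ%:R ^+ size (primes d) <= N%:R `^ s * \prod_(p <- primes d) g p.
  move=> d_sqf; have d_gt0 : (0 < d)%N by case/andP: d_sqf.
  rewrite prodf_div big_const_seq count_predT iter_mulr_1 -powR_prod // -natr_prod.
  rewrite squarefree_prod_primes // mulrCA ler_peMr ?exprn_ge0 //.
  rewrite ler_pdivlMr ?powR_gt0 ?ltr0n // mul1r ge0_ler_powR ?nnegrE //.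
  by rewrite ler_nat -ltnS ltn_ord.
have prime_sum_le : \sum_(p < N.+1 | prime p) g p <= κ%:R / δ.
  apply: (@le_trans _ _ (\sum_(2 <= i < N.+1) g i)).
    have -> : \sum_(2 <= i < N.+1) g i = \sum_(i < N.+1 | (2 <= i)%N) g i.
      by rewrite big_geq_mkord.
    rewrite [leRHS](bigID (fun i : 'I_N.+1 => prime i)) /= -[leLHS]addr0 lerD ?sumr_ge0 //.
    rewrite (eq_bigl (fun i : 'I_N.+1 => (2 <= i)%N && prime i)) // => i.
    by case: (boolP (prime i)) => [/prime_gt1 ->|]; rewrite ?andbF.
  by rewrite -mulr_sumr ler_wpM2l // sum_inv_powR_le.
apply: (@le_trans _ _ (N%:R `^ s * \sum_(d < N.+1 | squarefree d) \prod_(p <- primes d) g p)).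
  by rewrite mulr_sumr; apply: ler_sum => d; apply: term_le.
rewrite ler_wpM2l ?powR_ge0 //; apply: le_trans (sum_squarefree_prod_le _ g_ge0) _.
apply: le_trans (_ : _ <= expR (\sum_(p < N.+1 | prime p) g p)) _.
  by rewrite expR_sum; apply: ler_prod => p _; rewrite addr_ge0 //= expR_ge1Dx.
by rewrite ler_expR.
Qed.
End Rankin.

Definition log_threshold (R : realType) (eps : R) : R := 1 + 5 * (5 + 2 / eps) / (4 * eps).

Section Asymptotics.
Variables (R : realType) (eps : R).
Hypothesis eps_gt0 : 0 < eps.

Lemma log_threshold_ge1 : 1 <= log_threshold eps.
Proof.
have eps_ge0 := ltW eps_gt0.
by rewrite /log_threshold lerDl divr_ge0 ?mulr_ge0 ?addr_ge0 ?divr_ge0.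
Qed.

Lemma exponent_gap_le (y : R) : log_threshold eps <= y ->
  5 * y ^+ 2 + 2 * y / eps <= 4 * eps / 5 * y ^+ 5.
Proof.
move=> y_ge; have y_ge1 : 1 <= y := le_trans log_threshold_ge1 y_ge.
have c_gt0 : 0 < 4 * eps / 5 by rewrite divr_gt0 ?mulr_gt0.
have y3_ge : 5 + 2 / eps <= 4 * eps / 5 * y ^+ 3.
  have : 4 * eps / 5 * log_threshold eps <= 4 * eps / 5 * y ^+ 3.
    by rewrite ler_pM2l //; apply: le_trans y_ge (ler_eXnr _ y_ge1).
  have -> : 4 * eps / 5 * log_threshold eps = 4 * eps / 5 + (5 + 2 / eps).
    by rewrite /log_threshold; field; rewrite gt_eqF.
  by apply: le_trans; rewrite lerDr ltW.
have y2_ge0 : 0 <= y ^+ 2 by rewrite sqr_ge0.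
have -> : 4 * eps / 5 * y ^+ 5 = y ^+ 2 * (4 * eps / 5 * y ^+ 3) by ring.
have -> : 5 * y ^+ 2 + 2 * y / eps = y ^+ 2 * 5 + y * (2 / eps) by ring.
apply: le_trans _ (ler_wpM2l y2_ge0 y3_ge).
rewrite [leRHS]mulrDr lerD2l ler_wpM2r ?divr_ge0 ?(ltW eps_gt0) //.
exact: ler_eXnr.
Qed.

Lemma root5K (L : R) : 0 <= L -> (L `^ 5^-1) ^+ 5 = L.
Proof. by move=> L_ge0; rewrite -powR_mulrn ?powR_ge0 // -powRrM mulVf ?powRr1. Qed.

Lemma ler_root5 (a L : R) : 0 <= a -> a ^+ 5 <= L -> a <= L `^ 5^-1.
Proof.
move=> a_ge0 a5_le; have a5_ge0 : 0 <= a ^+ 5 by rewrite exprn_ge0.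
have -> : a = (a ^+ 5) `^ 5^-1 by rewrite -powR_mulrn // -powRrM divff ?powRr1.
by apply: ge0_ler_powR; rewrite ?nnegrE ?invr_ge0 // (le_trans a5_ge0).
Qed.

Lemma ln_le_root5 (L : R) : 0 < L -> ln L <= 5 * L `^ 5^-1.
Proof.
move=> L_gt0; have y_gt0 : 0 < L `^ 5^-1 by apply: powR_gt0.
have -> : ln L = 5 * ln (L `^ 5^-1) by rewrite ln_powR mulrA divff ?mul1r.
rewrite ler_pM2l //; have := @le_ln1Dx _ (L `^ 5^-1 - 1).
rewrite [1 + _]addrC subrK => ln_le; apply: le_trans (ln_le _) _; lra.
Qed.

Lemma sieve_error_le (X C : R) (k N : nat) : 0 < X ->
    log_threshold eps ^+ 5 <= ln X -> k%:R <= ln X `^ 5^-1 -> N%:R <= X `^ 10^-1 ->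
  3 * (C * ln X `^ (k%:R / 2)) ^+ 2
    * (\sum_(d < N.+1 | squarefree d) (maxn k 1)%:R ^+ size (primes d)) ^+ 2
  <= 3 * C ^+ 2 * X `^ (5^-1 + eps).
Proof.
move=> X_gt0 L_ge k_le N_le; set L := ln X; set y := L `^ 5^-1; set κ := maxn k 1.
have Y_ge1 := log_threshold_ge1.
have eps_ge0 := ltW eps_gt0.
have Y_ge0 : 0 <= log_threshold eps by lra.
have L_gt0 : 0 < L by apply: lt_le_trans L_ge; apply: exprn_gt0; lra.
have y_ge : log_threshold eps <= y := ler_root5 Y_ge0 L_ge.
have y5_eq : y ^+ 5 = L := root5K (ltW L_gt0).
have y_ge1 : 1 <= y by lra.
have κ_le : κ%:R <= y by rewrite /κ /maxn; case: ifP.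
have kL_le : k%:R * ln L <= 5 * y ^+ 2.
  have L_ge1 : 1 <= L by apply: le_trans L_ge; apply: exprn_ege1.
  rewrite (_ : 5 * y ^+ 2 = y * (5 * y)); last by ring.
  by apply: ler_pM; rewrite ?ler0n ?ln_ge0 // ln_le_root5.
have gap := exponent_gap_le y_ge; rewrite y5_eq in gap.
have X_pow a : X `^ a = expR (a * L) by rewrite /powR gt_eqF.
set G := \sum_(d < _ | _) _.
have G_ge0 : 0 <= G by apply: sumr_ge0 => d _; rewrite exprn_ge0.
have G_le : G <= expR ((1 + eps) / 10 * L + κ%:R / eps).
  apply: le_trans (sum_squarefree_exp_omega_le N κ eps_gt0) _.
  rewrite expRD ler_wpM2r ?expR_ge0 //.
  apply: le_trans (_ : _ <= (X `^ 10^-1) `^ (1 + eps)) _.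
    by apply: ge0_ler_powR; rewrite ?nnegrE ?ler0n ?powR_ge0 //; lra.
  by rewrite -powRrM X_pow [10^-1 * _]mulrC.
(* Taking logarithms, the claim reduces to k ln L + 2 κ / eps <= 4 eps L / 5. *)
have L_pow : L `^ (k%:R / 2) = expR (k%:R / 2 * ln L) by rewrite /powR gt_eqF.
have -> : 3 * (C * L `^ (k%:R / 2)) ^+ 2 * G ^+ 2
    = 3 * C ^+ 2 * (expR (k%:R / 2 * ln L) * G) ^+ 2 by rewrite L_pow; ring.
apply: ler_wpM2l; first by rewrite mulr_ge0 ?sqr_ge0.
apply: le_trans (_ : _ <= expR (k%:R / 2 * ln L + ((1 + eps) / 10 * L + κ%:R / eps)) ^+ 2) _.
  by rewrite ler_sqr ?nnegrE ?mulr_ge0 ?expR_ge0 // expRD ler_wpM2l ?expR_ge0.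
have κ_eps : κ%:R / eps <= y / eps by rewrite ler_pM2r ?invr_gt0.
rewrite -expRM_natr X_pow ler_expR; lra.
Qed.
End Asymptotics.

Theorem lemma5 (R : realType) (c0 : R) (Cbv : R -> R) (C : R) :
  0 < c0 ->
  forall eps : R, 0 < eps ->
  exists K X0 : R, forall X : R, X0 <= X ->
  forall (p0 : nat) (Ls : seq (nat * nat)) (v0 : int) (lam : nat -> R),
    let k := size Ls in
    let W := Wof (2 * (ln X) `^ (3^-1)) p0 in
    (* hypotheses on p0 *)
    prime p0 ->
    ln (ln X) / 2 <= p0%:R -> p0%:R <= X ->
    (forall e : R, 0 < e ->
       \sum_(q < (Num.truncn (X `^ (2^-1 - e))).+1 |
               (0 < q)%N && (q%:R < X `^ (2^-1 - e)) && coprime q p0)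
          BVerr X q
       <= Cbv e * X * expR (- c0 * Num.sqrt (ln X))) ->
    (* hypotheses on the linear forms *)
    k%:R <= (ln X) `^ (5^-1) ->
    uniq Ls ->
    (forall ab, ab \in Ls ->
       [/\ (0 < ab.1)%N, ab.1%:R <= (ln X) `^ (3^-1), coprime (2 * p0) ab.1,
           (0 < ab.2)%N & ab.2%:R < X]) ->
    P3_admissible Ls ->
    (* v0 *)
    (forall ab, ab \in Ls -> gcdz (Lz ab v0) W%:Z = 1) ->
    (* sieve weights *)
    (forall d : nat, lam d != 0 ->
       [/\ d%:R <= X `^ (10^-1), squarefree d, inP3 d & coprime d (p0 * W)]) ->
    (forall d : nat, `|lam d| <= C * (ln X) `^ (k%:R / 2)) ->
    `| \sum_(n < (Num.truncn (2 * X)).+1 |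
              (X < n%:R) && (n%:R <= 2 * X) && (n%:Z == v0 %[mod W%:Z])%Z)
          wn Ls W v0 lam n
       - X / W%:R *
         \sum_(d < (Num.truncn (X `^ (10^-1))).+1)
         \sum_(e < (Num.truncn (X `^ (10^-1))).+1)
            lam d * lam e *
            \prod_(p <- primes (d * e)) ((nu Ls p)%:R / p%:R) |
    <= K * X `^ (5^-1 + eps).
Proof.
move=> _ eps eps_gt0; exists (3 * C ^+ 2), (expR (log_threshold eps ^+ 5)).
move=> X X_ge p0 Ls v0 lam k W _ _ _ _ k_le _ Ls_ok Ls_adm _ lam_supp lam_le.
have X_gt0 : 0 < X := lt_le_trans (expR_gt0 _) X_ge.
have L_ge : log_threshold eps ^+ 5 <= ln X by rewrite -ler_expR lnK ?posrE.
have W_gt0 : (0 < W)%N.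
  by rewrite prodn_cond_gt0 // => p /andP[/andP[/andP[/prime_gt0]]].
set N := Num.truncn (X `^ 10^-1).
have N_le : N%:R <= X `^ 10^-1 by rewrite truncn_le powR_ge0.
have lam_supp' d : lam d != 0 -> [/\ (d <= N)%N, squarefree d, inP3 d & coprime d W].
  case/lam_supp => d_le d_sqf d_P3; rewrite coprimeMr => /andP[_ d_W].
  by split=> //; rewrite truncn_ge_nat ?powR_ge0.
have b_gt0 ab : ab \in Ls -> (0 < ab.2)%N by case/Ls_ok.
apply: le_trans (sum_wn_approx v0 (ltW X_gt0) W_gt0 (leq_maxl k 1) (leq_maxr k 1)
                   Ls_adm b_gt0 lam_supp' lam_le) _.
exact: sieve_error_le.
Qed.
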